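(* The power series $[\sqrt2]_q$, $[\sqrt3]_q$, $[\sqrt5]_q$, $[\sqrt7]_q\in\mathbb{Z}[[q]]$ satisfy $$\begin{aligned} q^2[\sqrt2]_q^2-(q^3-1)[\sqrt2]_q&=q^2+1,\\ q^2[\sqrt3]_q^2-(q^3+q^2-q-1)[\sqrt3]_q&=q^2+q+1,\\ q^3[\sqrt5]_q^2-(q^5+q^3-q^2-1)[\sqrt5]_q&=q^4+q^3+q^2+q+1,\\ q^3[\sqrt7]_q^2-(q^5+q^4-q-1)[\sqrt7]_q&=q^4+2q^3+q^2+2q+1. \end{aligned}$$
   Context: For an integer $a\geq1$ put $[a]_q=1+q+\cdots+q^{a-1}$ and $[a]_{q^{-1}}=1+q^{-1}+\cdots+q^{-(a-1)}$. Every rational number $r/s>1$ has a unique even-length regular continued fraction $r/s=[a_1,\ldots,a_{2m}]$ with $a_i\in\mathbb{Z}_{\geq1}$. Its $q$-deformation is the rational function $$\left[\tfrac{r}{s}\right]_q=[a_1]_q+\cfrac{q^{a_1}}{[a_2]_{q^{-1}}+\cfrac{q^{-a_2}}{[a_3]_q+\cfrac{q^{a_3}}{\ddots+\cfrac{q^{a_{2m-1}}}{[a_{2m}]_{q^{-1}}}}}}.$$ One also sets $[1]_q=1$. Each $[r/s]_q$ is identified with its Taylor expansion at $q=0$. For an irrational real number $x>1$ with continued fraction $x=[a_1,a_2,\ldots]$ and convergents $x_n=[a_1,\ldots,a_n]$, define $$[x]_q:=\sum_{k\geq0}\varkappa_kq^k,\qquad \varkappa_k=\lim_{n\to\infty}\bigl(\text{coefficient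 of }q^k\text{ in }[x_n]_q\bigr).$$ These limits exist and are eventually attained. The continued fractions are $\sqrt2=[1,\overline{2}]$, $\sqrt3=[1,\overline{1,2}]$, $\sqrt5=[2,\overline{4}]$ and $\sqrt7=[2,\overline{1,1,1,4}]$, where the bar denotes the periodically repeated block. *)

From HB Require Import structures.
From mathcomp Require Import all_boot all_order all_algebra.
From mathcomp Require Import fraction.
Set Implicit Arguments. Unset Strict Implicit. Unset Printing Implicit Defensive.
Import Order.TTheory GRing.Theory Num.Theory.
Local Open Scope ring_scope.

Notation ratfun := {fraction {poly int}}.
Definition qvar : ratfun := FracField.tofrac 'X.
Definition polyF (p : {poly int}) : ratfun := FracField.tofrac p.

Definition qint (a : nat) : ratfun := \sum_(i < a) qvar ^+ i.
Definition qintinv (a : nat) : ratfun := \sum_(i < a) qvar ^- i.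

(* The q-continued fraction; b = true means the current entry uses [_]_q
   and numerator q^{a}, b = false means [_]_{q^{-1}} and q^{-a}. *)
Fixpoint qcf_aux (b : bool) (l : seq nat) : ratfun :=
  match l with
  | [::] => 0
  | [:: a] => if b then qint a else qintinv a
  | a :: l' =>
      if b then qint a + qvar ^+ a / qcf_aux (~~ b) l'
      else qintinv a + qvar ^- a / qcf_aux (~~ b) l'
  end.

(* Turn a regular continued fraction [a_1,...,a_n] (a_i >= 1) of a rational
   number > 1 into its (unique) even-length form. *)
Definition evenize (l : seq nat) : seq nat :=
  if odd (size l) then
    match rev l with
    | 1%N :: b :: r => rev (b.+1 :: r)
    | a :: r => rev (1%N :: a.-1 :: r)
    | [::] => [::]
    end
  else l.

(* [r/s]_q for r/s = [a_1,...,a_n]; with the convention [1]_q = 1. *)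
Definition qrat (l : seq nat) : ratfun :=
  if l == [:: 1%N] then 1 else qcf_aux true (evenize l).

Definition pser := nat -> int.
Definition psmul (f g : pser) : pser :=
  fun k => \sum_(i < k.+1) f i * g (k - i)%N.
Definition pspoly (p : {poly int}) : pser := fun k => p`_k.

Definition taylor (F : ratfun) (f : pser) : Prop :=
  exists N D : {poly int},
    D`_0 != 0 /\ F = polyF N / polyF D /\
    forall k, psmul (pspoly D) f k = N`_k.

(* [x]_q for an irrational x > 1 with partial quotients a 0, a 1, ...
   (a 0 = a_1 in the paper's numbering): every coefficient kappa_k is the
   eventual value of the coefficient of q^k in [x_n]_q. *)
Definition qirr (a : nat -> nat) (f : pser) : Prop :=
  forall k, exists M : nat, forall n : nat, (M <= n)%N ->
    exists g, taylor (qrat (mkseq a n.+1)) g /\ g k = f k.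

Definition cf_sqrt2 (n : nat) : nat := if n == 0%N then 1%N else 2%N.
Definition cf_sqrt3 (n : nat) : nat :=
  if n == 0%N then 1%N else if odd n then 1%N else 2%N.
Definition cf_sqrt5 (n : nat) : nat := if n == 0%N then 2%N else 4%N.
Definition cf_sqrt7 (n : nat) : nat :=
  if n == 0%N then 2%N else if (n %% 4 == 0)%N then 4%N else 1%N.

Definition quad_rel (A B C : {poly int}) (f : pser) : Prop :=
  forall k, psmul (pspoly A) (psmul f f) k + psmul (pspoly B) f k = C`_k.

From HB Require Import structures.
From mathcomp Require Import all_boot all_order all_algebra.
From mathcomp Require Import fraction ring zify.
Import Order.TTheory GRing.Theory Num.Theory.
Local Open Scope ring_scope.

(* A finite q-continued fraction equals N/D for a pair (N, D) of integer
   polynomials computed by the two-term recursion [cf_step]; when the list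
   has even length, D has constant term 1.  Consequently the Taylor series g
   of N/D is characterised by D * g = N modulo q^(k+1) for every k, and
   Taylor series are unique.
   For a quadratic irrational whose partial quotients are a_0 followed by a
   purely periodic block of even length p, the convergent taken after j
   more periods is obtained by applying a fixed "period map" j times.  If
   the quadratic form Q(N, D) = A N^2 + B N D - C D^2 is multiplied by q^c
   (c > 0) under the period map, Q vanishes to order j at that convergent;
   dividing by D^2 gives A f^2 + B f = C modulo q^j for the limit series f. *)

Lemma polyF1 : polyF 1 = 1. Proof. exact: rmorph1. Qed.
Lemma polyFX : polyF 'X = qvar. Proof. by []. Qed.
Lemma polyFD p q : polyF (p + q) = polyF p + polyF q. Proof. exact: rmorphD. Qed.
Lemma polyFM p q : polyF (p * q) = polyF p * polyF q. Proof. exact: rmorphM. Qed.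
Lemma polyFXn p n : polyF (p ^+ n) = polyF p ^+ n. Proof. exact: rmorphXn. Qed.
Definition polyFE := (polyF1, polyFX, polyFD, polyFM, polyFXn).

Lemma qvar_neq0 : qvar != 0.
Proof. by rewrite tofrac_eq0 polyX_eq0. Qed.

Lemma polyF_eq0 (p : {poly int}) : (polyF p == 0) = (p == 0).
Proof. exact: tofrac_eq0. Qed.

Definition qpoly (a : nat) : {poly int} := \sum_(i < a) 'X^i.

Lemma qpoly0 : qpoly 0 = 0.
Proof. exact: big_ord0. Qed.

Lemma qpolyS a : qpoly a.+1 = 1 + 'X * qpoly a.
Proof.
rewrite /qpoly big_ord_recl expr0 mulr_sumr; congr (_ + _).
by apply: eq_bigr => i _; rewrite exprS.
Qed.

Lemma qpoly_at1 a : (qpoly a).[1] = a%:R.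
Proof.
elim: a => [|a IH]; first by rewrite qpoly0 horner0.
by rewrite qpolyS hornerD hornerM hornerX IH hornerC mul1r -natr1 addrC.
Qed.

Lemma qpoly_coef0 a : (0 < a)%N -> (qpoly a)`_0 = 1.
Proof. by case: a => // a _; rewrite qpolyS coefD coefXM coefC. Qed.

Lemma polyF_qpoly a : polyF (qpoly a) = qint a.
Proof. by rewrite /polyF rmorph_sum; apply: eq_bigr => i _; rewrite rmorphXn. Qed.

(* [a+1]_{q^-1} = [a+1]_q / q^a: the reversed sum. *)
Lemma qintinvE a : qintinv a.+1 = qint a.+1 / qvar ^+ a.
Proof.
have qa : qvar ^+ a != 0 by rewrite expf_neq0 // qvar_neq0.
apply: (mulIf qa); rewrite divfK // /qintinv /qint mulr_suml.
rewrite (reindex_inj rev_ord_inj) /=; apply: eq_bigr => i _.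
rewrite subSS; have -> : qvar ^+ a = qvar ^+ (a - i) * qvar ^+ i.
  by rewrite -exprD subnK // -ltnS.
rewrite mulrA mulVf; first by rewrite mul1r.
exact: expf_neq0 qvar_neq0.
Qed.

(* For N/D the
   value of the tail, [cf_step true a] computes [a]_q + q^a/(N/D) and
   [cf_step false a] computes [a]_{q^-1} + q^-a/(N/D), both cleared of
   denominators. *)
Definition cf_step (b : bool) (a : nat) (v : {poly int} * {poly int}) :=
  if b then (qpoly a * v.1 + 'X^a * v.2, v.1)
  else ('X * qpoly a * v.1 + v.2, 'X^a * v.1).

Fixpoint cf_pair (b : bool) (l : seq nat) : {poly int} * {poly int} :=
  match l with
  | [::] => (0, 1)
  | [:: a] => if b then (qpoly a, 1) else (qpoly a, 'X^(a.-1))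
  | a :: l' => cf_step b a (cf_pair (~~ b) l')
  end.

Fixpoint cf_steps (b : bool) (l : seq nat) u :=
  if l is a :: l' then cf_step b a (cf_steps (~~ b) l' u) else u.

Lemma cf_pair_cons b a l :
  l != [::] -> cf_pair b (a :: l) = cf_step b a (cf_pair (~~ b) l).
Proof. by case: l. Qed.

Lemma cf_pair_cat b l t : t != [::] ->
  cf_pair b (l ++ t) = cf_steps b l (cf_pair (odd (size l) (+) b) t).
Proof.
move=> ht; elim: l b => [|x l IH] b //.
have hlt : l ++ t != [::] by case: l {IH}.
by rewrite cat_cons cf_pair_cons // IH /= addNb addbN.
Qed.

(* Both components are positive at q = 1 (they count continuants), so
   neither vanishes. *)
Lemma cf_pair_at1 b l : l != [::] -> all (leq 1) l ->
  0 < (cf_pair b l).1.[1] /\ 0 < (cf_pair b l).2.[1].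
Proof.
elim: l b => // a l IH b _ /andP[ha hl].
have qa : 0 < (qpoly a).[1] by rewrite qpoly_at1 ltr0n.
case: l IH hl => [|c l] IH hl.
  by case: b; split; rewrite //= ?hornerC ?hornerXn ?expr1n.
rewrite cf_pair_cons //; have [] := IH (~~ b) isT hl.
case: (cf_pair _ _) => N D /= hN hD.
case: b; split; rewrite //= ?hornerD ?hornerM ?hornerXn ?hornerX ?expr1n ?mul1r //.
all: by rewrite addr_gt0 // mulr_gt0.
Qed.

Lemma cf_pair_neq0 b l : l != [::] -> all (leq 1) l ->
  (cf_pair b l).1 != 0 /\ (cf_pair b l).2 != 0.
Proof.
move=> l0 hl; have [h1 h2] := cf_pair_at1 b l l0 hl.
by split; apply: contraTneq isT => e; [move: h1|move: h2]; rewrite e horner0 ltxx.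
Qed.

Lemma step_identity_q (F : fieldType) (s x n d : F) k : n != 0 ->
  s + x ^+ k / (n / d) = (s * n + x ^+ k * d) / n.
Proof. by move=> n0; rewrite invf_div; field. Qed.

Lemma step_identity_qinv (F : fieldType) (s x n d : F) k : x != 0 -> n != 0 ->
  s / x ^+ k + x ^- k.+1 / (n / d) = (x * s * n + d) / (x ^+ k.+1 * n).
Proof.
by move=> x0 n0; rewrite invf_div exprS; field; rewrite n0 x0 expf_neq0.
Qed.

Lemma cf_step_val b a (v : {poly int} * {poly int}) : (0 < a)%N -> v.1 != 0 ->
  (if b then qint a + qvar ^+ a / (polyF v.1 / polyF v.2)
   else qintinv a + qvar ^- a / (polyF v.1 / polyF v.2))
  = polyF (cf_step b a v).1 / polyF (cf_step b a v).2.
Proof.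
case: a => // a _; case: v => N D /= hN.
have nF : polyF N != 0 by rewrite polyF_eq0.
case: b; rewrite /= !polyFE polyF_qpoly ?qintinvE.
  exact: step_identity_q.
exact: step_identity_qinv qvar_neq0 nF.
Qed.

Lemma cf_pair_val b l : l != [::] -> all (leq 1) l ->
  qcf_aux b l = polyF (cf_pair b l).1 / polyF (cf_pair b l).2.
Proof.
elim: l b => // a l IH b _ /andP[ha hl].
case: l IH hl => [|c l] IH hl.
  case: a ha => // a _; case: b => /=.
    by rewrite polyF1 divr1 polyF_qpoly.
  by rewrite qintinvE polyFXn polyFX polyF_qpoly.
have [n0 _] := cf_pair_neq0 (~~ b) (c :: l) isT hl.
by rewrite cf_pair_cons // -cf_step_val // -IH.
Qed.

Lemma cf_pair_coef0 b l : l != [::] -> all (leq 1) l -> odd (size l) = ~~ b ->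
  (if b then (cf_pair b l).2 else (cf_pair b l).1)`_0 = 1.
Proof.
elim: l b => // a l IH b _ /andP[ha hl].
case: l IH hl => [|c l] IH hl.
  by case: b => //= _; rewrite qpoly_coef0.
rewrite cf_pair_cons // => hs.
have hs' : odd (size (c :: l)) = b by case: b hs => /=; case: (odd (size l)).
have := IH (~~ b) isT hl; rewrite negbK => /(_ hs').
case: (cf_pair _ _) => N D; case: b {hs hs'} => /= h; first exact: h.
by rewrite -mulrA coefD coefXM add0r.
Qed.

(* [evenize] at the end of a list of total length k: when k is odd, the
   last entry is adjusted so that the total length becomes even. *)
Definition evenize_at (k : nat) (t : seq nat) : seq nat :=
  if odd k then
    match rev t with
    | 1%N :: b :: r => rev (b.+1 :: r)
    | a :: r => rev (1%N :: a.-1 :: r)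
    | [::] => [::]
    end
  else t.

Lemma evenizeE l : evenize l = evenize_at (size l) l.
Proof. by []. Qed.

Lemma evenize_at_cat k s t :
  (1 < size t)%N -> evenize_at k (s ++ t) = s ++ evenize_at k t.
Proof.
rewrite /evenize_at; case: (odd k) => //; rewrite rev_cat -size_rev.
have E x : rev (x ++ rev s) = s ++ rev x by rewrite rev_cat revK.
case: (rev t) => [|c [|d r]] //= _.
case: c => [|[|c]].
- exact: (E [:: 1%N, 0%N, d & r]).
- exact: (E [:: d.+1 & r]).
- exact: (E [:: 1%N, c.+1, d & r]).
Qed.

Lemma evenize_at_pos k t :
  (1 < size t)%N -> all (leq 1) t -> all (leq 1) (evenize_at k t).
Proof.
rewrite /evenize_at; case: (odd k) => //; rewrite -all_rev -size_rev.
case: (rev t) => [|c [|d r]] //= _.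
case: c => [|[|c]]; rewrite /= all_rev /= //.
all: by case/andP => h1 h2; rewrite ?h1 ?h2.
Qed.

Lemma size_evenize_at k t : (1 < size t)%N ->
  odd (size (evenize_at k t)) = odd (size t) (+) odd k.
Proof.
rewrite /evenize_at; case: (odd k); rewrite ?addbF ?addbT // -size_rev.
case: (rev t) => [|c [|d r]] //= _.
by case: c => [|[|c]]; rewrite /= size_rev /= ?negbK.
Qed.

Definition eq_upto (k : nat) (p q : {poly int}) :=
  forall i, (i <= k)%N -> p`_i = q`_i.
Definition trunc (k : nat) (g : pser) : {poly int} := \poly_(i < k.+1) g i.

Section EqUpto.
Implicit Types (k : nat) (c p q r : {poly int}).

Lemma eq_upto_refl k p : eq_upto k p p.
Proof. by []. Qed.

Lemma eq_upto_sym {k p q} : eq_upto k p q -> eq_upto k q p.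
Proof. by move=> h i hi; rewrite h. Qed.

Lemma eq_upto_trans {k p q r} : eq_upto k p q -> eq_upto k q r -> eq_upto k p r.
Proof. by move=> h1 h2 i hi; rewrite h1 ?h2. Qed.

Lemma eq_upto_add {k p p' q q'} :
  eq_upto k p p' -> eq_upto k q q' -> eq_upto k (p + q) (p' + q').
Proof. by move=> h1 h2 i hi; rewrite !coefD h1 ?h2. Qed.

Lemma eq_upto_sub {k p p' q q'} :
  eq_upto k p p' -> eq_upto k q q' -> eq_upto k (p - q) (p' - q').
Proof. by move=> h1 h2 i hi; rewrite !coefB h1 ?h2. Qed.

Lemma eq_upto_mul {k p p' q q'} :
  eq_upto k p p' -> eq_upto k q q' -> eq_upto k (p * q) (p' * q').
Proof.
move=> hp hq i hi; rewrite !coefM; apply: eq_bigr => j _.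
have hj : (j <= k)%N := leq_trans (ltnSE (ltn_ord j)) hi.
by rewrite hp // hq // (leq_trans (leq_subr _ _) hi).
Qed.

Lemma eq_upto_cancel c {k p q} :
  c`_0 != 0 -> eq_upto k (c * p) (c * q) -> eq_upto k p q.
Proof.
move=> c0 h; suff H i : (i <= k)%N -> (p - q)`_i = 0.
  by move=> i hi; apply/eqP; rewrite -subr_eq0 -coefB H.
elim/ltn_ind: i => i IH hi.
have : (c * (p - q))`_i = 0 by rewrite mulrBr coefB h // subrr.
rewrite coefM big_ord_recl big1 ?addr0 => [/eqP|j _].
  by rewrite mulf_eq0 (negbTE c0) subn0 => /eqP.
rewrite IH ?mulr0 //; last exact: leq_trans (leq_subr _ _) hi.
by case: i {IH hi} j => [[]|i j] //=; rewrite subSS ltnS leq_subr.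
Qed.

Lemma psmul_trunc k P g j :
  (j <= k)%N -> psmul (pspoly P) g j = (P * trunc k g)`_j.
Proof.
move=> hj; rewrite coefM /psmul; apply: eq_bigr => i _.
by rewrite coef_poly /pspoly ltnS (leq_trans (leq_subr _ _) hj).
Qed.

Lemma trunc_psmul k g h : eq_upto k (trunc k (psmul g h)) (trunc k g * trunc k h).
Proof.
move=> i hi; rewrite coefM coef_poly ltnS hi /psmul; apply: eq_bigr => j _.
have hj : (j <= k)%N := leq_trans (ltnSE (ltn_ord j)) hi.
by rewrite !coef_poly !ltnS hj (leq_trans (leq_subr _ _) hi).
Qed.

Lemma eq_upto_trunc k g h :
  (forall j, (j <= k)%N -> g j = h j) -> eq_upto k (trunc k g) (trunc k h).
Proof. by move=> gh i hi; rewrite !coef_poly ltnS hi gh. Qed.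

End EqUpto.

Lemma taylor_trunc (N D : {poly int}) g k :
  D != 0 -> taylor (polyF N / polyF D) g -> eq_upto k (D * trunc k g) N.
Proof.
move=> hD [N' [D' [hD'0 [hF hg]]]].
have hD' : D' != 0 by apply: contraNneq hD'0 => ->; rewrite coef0.
have e : N * D' = N' * D.
  apply/eqP; rewrite -tofrac_eq -!/(polyF _) !polyFM -eqr_div ?polyF_eq0 //.
  by rewrite hF.
apply: (eq_upto_cancel D' hD'0); rewrite mulrCA mulrC [D' * N]mulrC e.
by apply: eq_upto_mul => // i hi; rewrite -psmul_trunc.
Qed.

Lemma taylor_unique F g h : taylor F g -> taylor F h -> g =1 h.
Proof.
move=> tg th j; have [N [D [hD0 [hF hg]]]] := tg.
have hD : D != 0 by apply: contraNneq hD0 => ->; rewrite coef0.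
have Dg : eq_upto j (D * trunc j g) N by move=> i hi; rewrite -psmul_trunc.
rewrite hF in th; have Dh := taylor_trunc N D h j hD th.
have := eq_upto_cancel D hD0 (eq_upto_trans Dg (eq_upto_sym Dh)).
by move=> /(_ j (leqnn j)); rewrite !coef_poly ltnS leqnn.
Qed.

(* The coefficients of [x]_q up to degree k are all attained at a common
   convergent, by uniqueness of Taylor series. *)
Lemma qirr_eventually a f : qirr a f -> forall k, exists M, forall n, (M <= n)%N ->
  exists2 g, taylor (qrat (mkseq a n.+1)) g & forall j, (j <= k)%N -> g j = f j.
Proof.
move=> hq; elim=> [|k [M IH]].
  have [M HM] := hq 0%N; exists M => n /HM [g [tg g0]].
  by exists g => // j; rewrite leqn0 => /eqP ->.
have [M' HM'] := hq k.+1; exists (maxn M M') => n; rewrite geq_max.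
case/andP=> /IH [g tg hg] /HM' [g' [tg' hg']]; exists g' => // j.
rewrite leq_eqVlt => /orP[/eqP -> //|hj].
by rewrite -(taylor_unique _ _ _ tg tg') hg.
Qed.

Definition quad_form (A B C : {poly int}) (v : {poly int} * {poly int}) :=
  A * v.1 * v.1 + B * v.1 * v.2 - C * v.2 * v.2.

Lemma quad_rel_coef A B C (v : {poly int} * {poly int}) f k :
  v.2`_0 != 0 -> eq_upto k (v.2 * trunc k f) v.1 ->
  eq_upto k (quad_form A B C v) 0 ->
  psmul (pspoly A) (psmul f f) k + psmul (pspoly B) f k = C`_k.
Proof.
case: v => N D /= D0 hDf hQ; set F := trunc k f.
have hrel : eq_upto k (A * (F * F) + B * F - C) 0.
  apply: (eq_upto_cancel (D * D)); first by rewrite coefM big_ord1 mulf_neq0.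
  rewrite mulr0; apply: eq_upto_trans hQ.
  have -> : D * D * (A * (F * F) + B * F - C) = quad_form A B C (D * F, D).
    by rewrite /quad_form /=; ring.
  rewrite /quad_form /=; apply: eq_upto_sub => //.
  by apply: eq_upto_add; do 2?apply: eq_upto_mul.
have := hrel k (leqnn k); rewrite coef0 coefB coefD => /eqP.
rewrite subr_eq0 => /eqP <-; rewrite !(psmul_trunc k _ _ _ (leqnn k)).
by congr (_ + _); apply: (eq_upto_mul (eq_upto_refl k A) (trunc_psmul k f f)).
Qed.

Lemma mkseqD (T : Type) (f : nat -> T) m n :
  mkseq f (m + n) = mkseq f m ++ mkseq (fun i => f (m + i)%N) n.
Proof.
rewrite /mkseq iotaD map_cat add0n; congr (_ ++ _).
by rewrite -(addn0 m) iotaDl -map_comp addn0.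
Qed.

Lemma mkseq_cons (T : Type) (f : nat -> T) n :
  mkseq f n.+1 = f 0%N :: mkseq (fun i => f i.+1) n.
Proof. by rewrite -add1n mkseqD. Qed.

(* The tail of the even-length continued fraction of the n-th convergent
   [a_0, ..., a_n], and the corresponding numerator/denominator pair. *)
Definition cf_tail (a : nat -> nat) (n : nat) : seq nat :=
  evenize_at n.+1 (mkseq (fun i => a i.+1) n).
Definition conv (a : nat -> nat) (n : nat) := cf_pair true (a 0%N :: cf_tail a n).

(* For n >= 2 the whole list a_0 :: cf_tail a n has even length. *)
Lemma cf_tail_odd a n : (1 < n)%N -> odd (size (cf_tail a n)).
Proof. by move=> hn; rewrite size_evenize_at size_mkseq //= addbN addbb. Qed.

Lemma cf_tail_neq0 a n : (1 < n)%N -> cf_tail a n != [::].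
Proof. by move/(cf_tail_odd a); case: (cf_tail a n). Qed.

Section PeriodicContinuedFraction.
Variables (a : nat -> nat) (p c : nat) (A B C : {poly int}).
Hypothesis a_pos : forall i, (0 < a i)%N.
Hypothesis a_periodic : forall i, a (p + i).+1 = a i.+1.
Hypothesis p_even : ~~ odd p.
Hypothesis p_pos : (0 < p)%N.
Hypothesis c_pos : (0 < c)%N.
Hypothesis period_map : forall u,
  quad_form A B C (cf_step true (a 0%N) (cf_steps false (mkseq (fun i => a i.+1) p) u))
  = 'X^c * quad_form A B C (cf_step true (a 0%N) u).

Lemma cf_tail_pos n : (1 < n)%N -> all (leq 1) (cf_tail a n).
Proof.
move=> hn; apply: evenize_at_pos; rewrite ?size_mkseq //.
by apply/allP => _ /mapP[i _ ->]; exact: a_pos.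
Qed.

Lemma qrat_conv n : (1 < n)%N ->
  qrat (mkseq a n.+1) = polyF (conv a n).1 / polyF (conv a n).2.
Proof.
move=> hn; rewrite /qrat ifF; last first.
  by apply/eqP => /(congr1 size); rewrite size_mkseq; case: n hn => [|[]].
rewrite evenizeE size_mkseq mkseq_cons (evenize_at_cat _ [:: a 0%N]) ?size_mkseq //.
rewrite cf_pair_val //=.
by rewrite a_pos cf_tail_pos.
Qed.

Lemma conv_coef0 n : (1 < n)%N -> (conv a n).2`_0 = 1.
Proof.
move=> hn; apply: (cf_pair_coef0 true (a 0%N :: cf_tail a n)) => //=.
  by rewrite a_pos cf_tail_pos.
by rewrite cf_tail_odd.
Qed.

Lemma cf_tail_shift n : (1 < n)%N ->
  cf_tail a (n + p) = mkseq (fun i => a i.+1) p ++ cf_tail a n.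
Proof.
move=> hn; rewrite /cf_tail addnC mkseqD evenize_at_cat ?size_mkseq //.
rewrite (eq_mkseq (g := fun i => a i.+1)) => [|i]; last exact: a_periodic.
by rewrite /evenize_at -addnS oddD (negbTE p_even).
Qed.

Lemma conv_shift n : (1 < n)%N ->
  quad_form A B C (conv a (n + p)) = 'X^c * quad_form A B C (conv a n).
Proof.
move=> hn; rewrite /conv cf_tail_shift //.
have ne := cf_tail_neq0 a n hn.
have ne' : mkseq (fun i => a i.+1) p ++ cf_tail a n != [::].
  by apply: contra ne; rewrite -!size_eq0 size_cat addn_eq0 => /andP[_ ->].
rewrite !cf_pair_cons // cf_pair_cat // size_mkseq (negbTE p_even).
exact: period_map.
Qed.

Lemma conv_period j :
  quad_form A B C (conv a (2 + j * p)) = 'X^(c * j) * quad_form A B C (conv a 2).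
Proof.
elim: j => [|j IH]; first by rewrite mul0n muln0 expr0 mul1r.
by rewrite mulSn addnCA addnC conv_shift ?IH ?mulrA -?exprD ?mulnS //; lia.
Qed.

Theorem quad_rel_of_periodic f : qirr a f -> quad_rel A B C f.
Proof.
move=> hq k; have [M HM] := qirr_eventually a f hq k.
set j := (M + k.+1)%N; set n := (2 + j * p)%N.
have hn : (1 < n)%N by rewrite /n; lia.
have hMn : (M <= n)%N by rewrite /n /j; nia.
have [g tg hg] := HM n hMn.
have D0 := conv_coef0 n hn.
have hD : (conv a n).2 != 0 by apply: contraTneq isT => e; move: D0; rewrite e coef0.
rewrite qrat_conv // in tg.
apply: (quad_rel_coef A B C (conv a n)); first by rewrite D0.
  apply: eq_upto_trans (taylor_trunc _ _ g k hD tg).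
  by apply: eq_upto_mul => //; apply: eq_upto_trunc => i hi; rewrite hg.
move=> i hi; rewrite conv_period coefXnM coef0 ifT //.
by apply: leq_trans (leq_pmull _ c_pos); rewrite /j; lia.
Qed.

End PeriodicContinuedFraction.

(* The four cases, with even-length blocks [2,2], [1,2], [4,4], [1,1,1,4]
   (two periods for sqrt 2 and sqrt 5); the scaling of Q by the period map
   is a polynomial identity. *)
Lemma qsqrt2_rel f : qirr cf_sqrt2 f ->
  quad_rel ('X^2) (- ('X^3 - 1)) ('X^2 + 1) f.
Proof.
apply: (quad_rel_of_periodic _ 2 4) => //; first by case.
by case=> N D; rewrite /= !qpolyS qpoly0 /quad_form /=; ring.
Qed.

Lemma qsqrt3_rel f : qirr cf_sqrt3 f ->
  quad_rel ('X^2) (- ('X^3 + 'X^2 - 'X - 1)) ('X^2 + 'X + 1) f.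
Proof.
apply: (quad_rel_of_periodic _ 2 3) => //.
- by case=> [|i] //; rewrite /cf_sqrt3 /=; case: (odd _).
- by move=> i; rewrite /cf_sqrt3 add2n /= negbK.
- by case=> N D; rewrite /= !qpolyS qpoly0 /quad_form /=; ring.
Qed.

Lemma qsqrt5_rel f : qirr cf_sqrt5 f ->
  quad_rel ('X^3) (- ('X^5 + 'X^3 - 'X^2 - 1)) ('X^4 + 'X^3 + 'X^2 + 'X + 1) f.
Proof.
apply: (quad_rel_of_periodic _ 2 8) => //; first by case.
by case=> N D; rewrite /= !qpolyS qpoly0 /quad_form /=; ring.
Qed.

Lemma qsqrt7_rel f : qirr cf_sqrt7 f ->
  quad_rel ('X^3) (- ('X^5 + 'X^4 - 'X - 1))
           ('X^4 + 2%:R *: 'X^3 + 'X^2 + 2%:R *: 'X + 1) f.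
Proof.
apply: (quad_rel_of_periodic _ 4 7) => //.
- by case=> [|i] //; rewrite /cf_sqrt7 /=; case: (_ == _).
- by case=> N D; rewrite /= !qpolyS qpoly0 /quad_form /= -!mul_polyC; ring.
Qed.

Theorem proposition4p3 (f2 f3 f5 f7 : pser) :
  qirr cf_sqrt2 f2 -> qirr cf_sqrt3 f3 -> qirr cf_sqrt5 f5 -> qirr cf_sqrt7 f7 ->
  [/\ quad_rel ('X^2) (- ('X^3 - 1)) ('X^2 + 1) f2,
      quad_rel ('X^2) (- ('X^3 + 'X^2 - 'X - 1)) ('X^2 + 'X + 1) f3,
      quad_rel ('X^3) (- ('X^5 + 'X^3 - 'X^2 - 1))
               ('X^4 + 'X^3 + 'X^2 + 'X + 1) f5
    & quad_rel ('X^3) (- ('X^5 + 'X^4 - 'X - 1))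
               ('X^4 + 2%:R *: 'X^3 + 'X^2 + 2%:R *: 'X + 1) f7].
Proof.
move=> h2 h3 h5 h7; split.
- exact: qsqrt2_rel.
- exact: qsqrt3_rel.
- exact: qsqrt5_rel.
- exact: qsqrt7_rel.
Qed.
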